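(* Let $S$ be a numerical semigroup with multiplicity $m$, depth $q$, minimal generating set $P$, $D=S^*+S^*$, $L=\{s\in S: s<c\}$ and $X$ its set of nonzero Apéry elements. Then: (i) $\delta(x)\ge 0$ for all $x\in X$; (ii) $m=|P|+|X\cap D|$; (iii) $|L|=q+\tau(X)$.
   Context: A numerical semigroup is a subset $S\subseteq\mathbb N$ containing $0$, closed under addition, with finite complement. Let $S^*=S\setminus\{0\}$, $m=\min S^*$, $c=\max(\mathbb Z\setminus S)+1$ (conductor), $q=\lceil c/m\rceil$ (depth). $D=S^*+S^*=\{x+y: x,y\in S^*\}$ and $P=S^*\setminus D$. The Apéry set is $\{s\in S: s-m\notin S\}$, and $X$ is this set minus $\{0\}$. For $x\in S$, $\delta(x)$ is the unique integer such that $x+\delta(x)m\in[c,c+m-1]$, and for finite $A\subseteq S$, $\tau(A)=\sum_{x\in A}\delta(x)$. *)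

From mathcomp Require Import all_boot all_order all_algebra.
Set Implicit Arguments. Unset Strict Implicit. Unset Printing Implicit Defensive.
Import Order.TTheory GRing.Theory Num.Theory.

(* A numerical semigroup: a subset of nat containing 0, closed under addition,
   with finite complement (witnessed by a bound beyond which everything is in S). *)
Record numsg := NumSG {
  nsg :> pred nat;
  nsg_0 : nsg 0;
  nsg_add : forall x y, nsg x -> nsg y -> nsg (x + y);
  nsg_bound : nat;
  nsg_cofin : forall k, nsg_bound <= k -> nsg k
}.

Section Defs.
Variable S : numsg.

Definition Sstar : pred nat := fun x => (0 < x) && S x.

Lemma Sstar_ex : exists n, Sstar n.
Proof.
exists (nsg_bound S).+1; apply/andP; split => //.
by apply: nsg_cofin; exact: leqnSn.
Qed.

Definition mult : nat := ex_minn Sstar_ex.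

(* conductor c = max (Z \ S) + 1; since negative integers are not in S and
   all k >= nsg_bound are in S, this is max{k+1 : k < bound, k \notin S}, or 0. *)
Definition conductor : nat :=
  \max_(k < nsg_bound S | ~~ S k) k.+1.

Definition depth : nat := (conductor + mult.-1) %/ mult.

Definition inD (x : nat) : bool :=
  [exists y : 'I_x.+1, Sstar y && Sstar (x - y)].

Definition inP (x : nat) : bool := Sstar x && ~~ inD x.

(* Apery set w.r.t. m : {s in S : s - m notin S} (s - m taken in Z) *)
Definition apery (s : nat) : bool := S s && ~~ ((mult <= s) && S (s - mult)).

Definition inX (x : nat) : bool := apery x && (x != 0).

(* delta(x): the unique integer d with x + d m in [c, c+m-1];
   explicitly d = floor((c + m - 1 - x) / m). *)
Definition delta (x : nat) : int :=
  ((((conductor + mult).-1)%:Z - x%:Z) %/ mult%:Z)%Z.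

(* tau(A) = sum over A of delta, for A given by a duplicate-free enumeration *)
Definition tau (s : seq nat) : int := (\sum_(x <- s) delta x)%R.

Definition cardL : nat := count S (iota 0 conductor).

End Defs.

Definition enumerates (s : seq nat) (A : pred nat) : Prop :=
  uniq s /\ forall x, (x \in s) = A x.

(* For each residue r modulo m, the elements of S congruent to r are exactly
   w_r, w_r + m, w_r + 2m, ..., where w_r is the least element of S in that
   class; these w_r form the Apery set, and w_0 = 0.  Since w_r - m is not in S,
   w_r < c + m, whence delta(w_r) >= 0.  An element x of P other than m lies in
   the Apery set (otherwise x = m + (x - m) is in D), and conversely every
   element of X outside D is in P, so P is the disjoint union of {m} and X \ D,
   and m = 1 + |X| = |P| + |X n D|.  Finally the elements of L in the class of
   w_r are w_r, w_r + m, ... below c, and there are exactly delta(w_r) of them;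
   summing over r gives delta(0) + tau(X) = q + tau(X). *)

From mathcomp Require Import all_boot all_order all_algebra.
From mathcomp Require Import zify.
Import Order.TTheory GRing.Theory Num.Theory.
Set Implicit Arguments. Unset Strict Implicit. Unset Printing Implicit Defensive.

Lemma modn_eq_ltn_addn d x y : x = y %[mod d] -> x < y -> x + d <= y.
Proof.
move=> exy ltxy; have /dvdn_leq : d %| y - x by rewrite -eqn_mod_dvd ?exy // ltnW.
by rewrite subn_gt0 => /(_ ltxy); lia.
Qed.

Lemma count_residues d (p : pred nat) l : 0 < d ->
  count p l = \sum_(r < d) count (fun s => (s %% d == r) && p s) l.
Proof.
move=> d_gt0; elim: l => [|x l IHl] /=; first by rewrite big1.
rewrite big_split /= -IHl; congr (_ + _).
rewrite (bigD1 (Ordinal (ltn_pmod x d_gt0))) //= eqxx big1 ?addn0 // => j.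
by rewrite -val_eqE /= eq_sym => /negbTE ->.
Qed.

Lemma count_residue_class_iota d w n : 0 < d ->
  count (fun s => (s %% d == w %% d) && (w <= s)) (iota 0 n) = (n + d.-1 - w) %/ d.
Proof.
move=> d_gt0; elim: n => [|n IHn]; first by rewrite divn_small //; lia.
rewrite -addn1 iotaD count_cat IHn /= addn0 add0n.
have [wn|nw] := leqP w n; last by rewrite andbF !divn_small //; lia.
have -> : n + 1 + d.-1 - w = (n - w + d.-1).+1 by lia.
have -> : n + d.-1 - w = n - w + d.-1 by lia.
rewrite divnS // andbT addnC; congr (_ + _).
have -> : (n - w + d.-1).+1 = n - w + d by lia.
by rewrite dvdn_addl // eqn_mod_dvd.
Qed.

Section AperySet.
Variable S : numsg.
Local Notation m := (mult S).
Local Notation c := (conductor S).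

Lemma multP : [/\ 0 < m, S m & forall x, 0 < x -> S x -> m <= x].
Proof.
rewrite /mult; case: ex_minnP => n /andP[n_gt0 Sn] n_min; split => // x x_gt0 Sx.
by apply: n_min; rewrite /Sstar x_gt0.
Qed.

Lemma mult_gt0 : 0 < m. Proof. by case: multP. Qed.
Lemma mem_mult : S m. Proof. by case: multP. Qed.
Lemma mult_min x : 0 < x -> S x -> m <= x. Proof. by case: multP => _ _; apply. Qed.

Lemma mem_conductor k : c <= k -> S k.
Proof.
move=> ck; have [bk|kb] := leqP (nsg_bound S) k; first exact: nsg_cofin.
apply/negPn/negP => notSk.
have : k.+1 <= c by apply: (leq_bigmax_cond (F := fun i : 'I__ => (i : nat).+1) (Ordinal kb)).
lia.
Qed.

Lemma mem_addmul x k : S x -> S (x + k * m).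
Proof.
move=> Sx; elim: k => [|k IHk]; first by rewrite addn0.
by rewrite mulSn addnCA addnC nsg_add // mem_mult.
Qed.

Lemma exists_residue_class r : exists s, S s && (s %% m == r %% m).
Proof.
exists (c * m + r); rewrite modnMDl eqxx andbT; apply: mem_conductor.
by have := mult_gt0; nia.
Qed.

Definition apery_elt r := ex_minn (exists_residue_class r).

Lemma apery_eltP r : [/\ S (apery_elt r), apery_elt r = r %[mod m] &
  forall s, S s -> s = r %[mod m] -> apery_elt r <= s].
Proof.
rewrite /apery_elt; case: ex_minnP => w /andP[Sw /eqP wr] w_min.
by split => // s Ss sr; apply: w_min; rewrite Ss sr eqxx.
Qed.

Lemma mem_residue_class s r : s = r %[mod m] -> S s = (apery_elt r <= s).
Proof.
have [Sw wr w_min] := apery_eltP r; move=> sr.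
apply/idP/idP => [Ss|ws]; first exact: w_min.
have /divnK sw : m %| s - apery_elt r by rewrite -eqn_mod_dvd // wr sr.
have -> : s = apery_elt r + (s - apery_elt r) %/ m * m by rewrite sw; lia.
exact: mem_addmul.
Qed.

Lemma apery_apery_elt r : apery S (apery_elt r).
Proof.
have [Sw wr w_min] := apery_eltP r; rewrite /apery Sw /=.
apply/negP => /andP[mw Swm].
have : apery_elt r <= apery_elt r - m by rewrite w_min // -wr -{2}(subnK mw) modnDr.
by have := mult_gt0; lia.
Qed.

Lemma apery_eltE x r : apery S x -> x = r %[mod m] -> x = apery_elt r.
Proof.
case/andP => Sx notSxm xr; have [_ wr w_min] := apery_eltP r.
apply/eqP; rewrite eqn_leq w_min // andbT leqNgt; apply/negP => wx.
have wmx := modn_eq_ltn_addn (etrans wr (esym xr)) wx.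
move/negP: notSxm; apply; apply/andP; split; first lia.
rewrite (mem_residue_class (r := r)); first lia.
by rewrite -xr -{2}(subnK (_ : m <= x)) ?modnDr //; lia.
Qed.

Lemma apery_elt0 : apery_elt 0 = 0.
Proof.
have [_ _ w_min] := apery_eltP 0.
by apply/eqP; rewrite -leqn0 w_min // nsg_0.
Qed.

Lemma apery_ltn x : apery S x -> x < c + m.
Proof.
case/andP => Sx notSxm; rewrite ltnNge; apply/negP => cmx.
by move/negP: notSxm; apply; apply/andP; split; [lia | apply: mem_conductor; lia].
Qed.

Lemma deltaE x : x < c + m -> delta S x = Posz ((c + m.-1 - x) %/ m).
Proof.
move=> xcm; rewrite /delta subzn; last lia.
by rewrite divz_nat; congr (Posz (_ %/ _)); have := mult_gt0; lia.
Qed.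

Definition apery_seq := [seq apery_elt r | r <- iota 1 m.-1].

Lemma apery_seq_enum : enumerates apery_seq (inX S).
Proof.
have m_gt0 := mult_gt0; split.
  rewrite map_inj_in_uniq ?iota_uniq // => r1 r2; rewrite !mem_iota => r1m r2m e.
  have [_ e1 _] := apery_eltP r1; have [_ e2 _] := apery_eltP r2.
  rewrite -(modn_small (_ : r1 < m)); last lia.
  by rewrite -(modn_small (_ : r2 < m)) -?e1 -?e2 ?e //; lia.
move=> x; apply/mapP/idP => [[r]|/andP[ap x_neq0]].
  rewrite mem_iota => rm ->; rewrite /inX apery_apery_elt /=.
  have [_ wr _] := apery_eltP r; apply/eqP => w0.
  by move: wr; rewrite w0 mod0n modn_small; lia.
exists (x %% m); last exact: apery_eltE ap (esym (modn_mod _ _)).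
rewrite mem_iota; have := ltn_pmod x m_gt0.
have [xm0|] := posnP (x %% m); last lia.
by move: x_neq0; rewrite (apery_eltE (r := 0) ap) ?apery_elt0 // xm0 mod0n.
Qed.

Lemma inP_mult_or_XD x : inP S x = (x == m) || (inX S x && ~~ inD S x).
Proof.
have m_gt0 := mult_gt0; apply/idP/idP.
  case/andP => /andP[x_gt0 Sx] notDx; case: eqP => //= x_neq_m.
  rewrite notDx andbT /inX /apery Sx /=; apply/andP; split; last lia.
  apply/negP => /andP[mx Sxm]; move/negP: notDx; apply; apply/existsP.
  have mx1 : m < x.+1 by lia.
  by exists (Ordinal mx1); rewrite /Sstar /= mem_mult m_gt0 Sxm andbT; lia.
case/orP => [/eqP->|/andP[/andP[/andP[Sx _] x_neq0] notDx]].
  rewrite /inP /Sstar m_gt0 mem_mult /=.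
  apply/negP => /existsP[y /andP[/andP[y_gt0 Sy] /andP[my_gt0 _]]].
  by have := mult_min y_gt0 Sy; have := ltn_ord y; lia.
by rewrite /inP /Sstar Sx notDx andbT lt0n x_neq0.
Qed.

Lemma cardL_apery : cardL S = \sum_(r < m) (c + m.-1 - apery_elt r) %/ m.
Proof.
rewrite /cardL (count_residues _ _ mult_gt0); apply: eq_bigr => r _.
have wr : apery_elt r %% m = r by have [_ -> _] := apery_eltP r; rewrite modn_small.
rewrite -(count_residue_class_iota _ _ mult_gt0) wr; apply: eq_count => s.
have [/eqP sr|] //= := boolP (s %% m == r).
by apply: mem_residue_class; rewrite sr modn_small.
Qed.

Lemma delta_apery_ge0 x : inX S x -> (0 <= delta S x)%R.
Proof. by case/andP => /apery_ltn/deltaE ->. Qed.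

Lemma mult_cardP_cardXD : exists sP sXD : seq nat,
  [/\ enumerates sP (inP S), enumerates sXD (fun x => inX S x && inD S x)
    & m = size sP + size sXD].
Proof.
have [uniqX memX] := apery_seq_enum.
exists (m :: filter (predC (inD S)) apery_seq), (filter (inD S) apery_seq); split.
- split=> [|x]; last by rewrite inP_mult_or_XD in_cons mem_filter memX andbC.
  by rewrite /= filter_uniq // andbT mem_filter memX /inX /apery subnn leqnn nsg_0 !andbF.
- by split=> [|x]; rewrite ?filter_uniq // mem_filter memX andbC.
- rewrite /= !size_filter addSn addnC count_predC size_map size_iota.
  by have := mult_gt0; lia.
Qed.

Lemma cardL_depth_tau : ((cardL S)%:Z = (depth S)%:Z + tau S apery_seq)%R.
Proof.
have [_ memX] := apery_seq_enum.
pose F r := (c + m.-1 - apery_elt r) %/ m.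
have tauE : tau S apery_seq = (\sum_(r <- iota 1 m.-1) (F r)%:R)%R.
  rewrite /tau big_map big_seq [RHS]big_seq; apply: eq_bigr => r r_in.
  have /andP[/apery_ltn/deltaE -> _] : inX S (apery_elt r).
    by rewrite -memX; apply: map_f.
  by rewrite natz.
rewrite tauE -natr_sum natz -PoszD cardL_apery -(big_mkord xpredT F).
rewrite (big_ltn mult_gt0) /F apery_elt0 subn0 /depth.
by rewrite /index_iota subn1.
Qed.

End AperySet.

Theorem proposition2p9 (S : numsg) :
  (* (i) *)
  (forall x, inX S x -> (0 <= delta S x)%R) /\
  (* (ii) m = |P| + |X ∩ D| *)
  (exists sP sXD : seq nat,
      enumerates sP (inP S) /\
      enumerates sXD (fun x => inX S x && inD S x) /\
      mult S = size sP + size sXD) /\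
  (* (iii) |L| = q + tau(X) *)
  (exists sX : seq nat,
      enumerates sX (inX S) /\
      ((cardL S)%:Z = (depth S)%:Z + tau S sX)%R).
Proof.
split; first exact: delta_apery_ge0.
split.
  by have [sP [sXD [? ? ?]]] := mult_cardP_cardXD S; exists sP, sXD.
exists (apery_seq S); split; [exact: apery_seq_enum | exact: cardL_depth_tau].
Qed.
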